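(* Let $IS\in\{\Box,\blacksquare\}^2$ and let $\tau$ be a correct compositional translation from $\mathrm{SYNCSIMPLE}$ into $\mathrm{LOCKSIMPLE}_{2,IS}$ of blocking type $(P_1P_1,P_2P_2)$. Then $\tau(!)$ does not start with $P_1$.
   Context: $\mathrm{SYNCSIMPLE}$: subprocesses $\mathcal{U} ::= \checkmark \mid 0 \mid\, !\mathcal{U} \mid\, ?\mathcal{U}$; processes are finite parallel compositions ($\mid$ associative, commutative, $0$ a unit). Reduction: $!\mathcal{U}_1\mid ?\mathcal{U}_2\mid \mathcal{P}\to \mathcal{U}_1\mid\mathcal{U}_2\mid\mathcal{P}$. Successful: of form $\checkmark\mid\mathcal{P}$; may-convergent: reduces to a successful process; must-convergent: every reachable process is may-convergent. $\mathrm{LOCKSIMPLE}_{k,IS}$ ($IS\in\{\Box,\blacksquare\}^k$, $\Box$ empty, $\blacksquare$ full): subprocesses are words over $\{P_1,T_1,\dots,P_k,T_k\}$ followed by $0$ or $\checkmark$; states $(\mathcal{P},C)$ reduce by $(P_i\mathcal{U}\mid\mathcal{P},C)\to(\mathcal{U}\mid\mathcal{P},C[C_i:=\blacksquare])$ only if $C_i=\Box$, and $(T_i\mathcal{U}\mid\mathcal{P},C)\to(\mathcal{U}\mid\mathcal{P},C[C_i:=\Box])$ always. Success = process contains $\checkmark$; a process $\mathcal{P}$ is may/must-convergent iff the state $(\mathcal{P},IS)$ is. A compositional translation $\tau$ is given by words $\tau(!),\tau(?)$ with $\tau(0)=0$, $\tau(\checkmark)=\checkmark$, $\tau(!\mathcal{U})=\tau(!)\tau(\mathcal{U})$,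 $\tau(?\mathcal{U})=\tau(?)\tau(\mathcal{U})$, $\tau$ commuting with $\mid$; correct = preserves and reflects may- and must-convergence. Blocking type of a word $S$: execute $S$ alone from $IS$; if it gets stuck at an occurrence of $P_i$ that is the first symbol from $\{P_i,T_i\}$ in $S$ the type is $P_i$, if stuck at a later occurrence of $P_i$ the type is $P_iP_i$; $\tau$ has blocking type $(W_1,W_2)$ if $\tau(!)$ has type $W_1$ and $\tau(?)$ type $W_2$. *)

From Stdlib Require List.
From Stdlib Require Import Permutation.
From mathcomp Require Import all_boot.

Set Implicit Arguments.
Unset Strict Implicit.
Unset Printing Implicit Defensive.

Inductive ssub : Type :=
  | SCheck : ssub
  | SZero  : ssub
  | SSend  : ssub -> ssub
  | SRecv  : ssub -> ssub.

(* processes: finite parallel compositions, as lists up to permutation *)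
Definition sproc := seq ssub.

Definition sstep (P Q : sproc) : Prop :=
  exists u1 u2 R, Permutation P (SSend u1 :: SRecv u2 :: R) /\ Q = u1 :: u2 :: R.

Inductive star (A : Type) (r : A -> A -> Prop) : A -> A -> Prop :=
  | star_refl x : star r x x
  | star_step x y z : r x y -> star r y z -> star r x z.

Definition ssuccessful (P : sproc) : Prop := List.In SCheck P.
Definition smay (P : sproc) : Prop := exists Q, star sstep P Q /\ ssuccessful Q.
Definition smust (P : sproc) : Prop := forall Q, star sstep P Q -> smay Q.

(* a symbol is (true, i) = P_i or (false, i) = T_i; lock indices are 'I_k,
   so the paper's P_1, P_2 are LP ord0, LP ord_max for k = 2. *)
Definition lsym (k : nat) := (bool * 'I_k)%type.
Definition LP k (i : 'I_k) : lsym k := (true, i).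
Definition LT k (i : 'I_k) : lsym k := (false, i).

(* a subprocess: a word followed by 0 (false) or checkmark (true) *)
Definition lsub (k : nat) := (seq (lsym k) * bool)%type.
Definition lproc (k : nat) := seq (lsub k).
(* lock contents: true = full (blacksquare), false = empty (box) *)
Definition lockst (k : nat) := {ffun 'I_k -> bool}.
Definition lstate (k : nat) := (lproc k * lockst k)%type.

Definition upd k (C : lockst k) (i : 'I_k) (b : bool) : lockst k :=
  [ffun j => if j == i then b else C j].

Definition lstep k (S S' : lstate k) : Prop :=
  (exists i w e R, Permutation S.1 ((LP i :: w, e) :: R) /\ S.2 i = false /\
      S' = ((w, e) :: R, upd S.2 i true))
  \/
  (exists i w e R, Permutation S.1 ((LT i :: w, e) :: R) /\
      S' = ((w, e) :: R, upd S.2 i false)).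

Definition lsuccessful k (S : lstate k) : Prop := List.In ([::], true) S.1.
Definition lmay k (S : lstate k) : Prop :=
  exists S', star (@lstep k) S S' /\ lsuccessful S'.
Definition lmust k (S : lstate k) : Prop :=
  forall S', star (@lstep k) S S' -> lmay S'.

(* tau is determined by the words ts = tau(!) and tr = tau(?) *)
Fixpoint tr_sub k (ts tr : seq (lsym k)) (u : ssub) : lsub k :=
  match u with
  | SCheck => ([::], true)
  | SZero => ([::], false)
  | SSend u' => let p := tr_sub ts tr u' in (ts ++ p.1, p.2)
  | SRecv u' => let p := tr_sub ts tr u' in (tr ++ p.1, p.2)
  end.

Definition tr_proc k (ts tr : seq (lsym k)) (P : sproc) : lproc k :=
  map (tr_sub ts tr) P.

Definition correct_translation k (IS : lockst k) (ts tr : seq (lsym k)) : Prop :=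
  forall P : sproc,
    (smay P <-> lmay (tr_proc ts tr P, IS)) /\
    (smust P <-> lmust (tr_proc ts tr P, IS)).

Inductive btype (k : nat) : Type :=
  | BNone                   (* the word does not get stuck *)
  | BFirst of 'I_k          (* type P_i  *)
  | BLater of 'I_k.         (* type P_iP_i *)

(* execute the word alone; [pre] is the already executed prefix *)
Fixpoint btype_aux k (pre : seq (lsym k)) (w : seq (lsym k)) (C : lockst k)
  : btype k :=
  match w with
  | [::] => BNone k
  | s :: w' =>
      if s.1 then
        if C s.2 then
          (if has (fun t : lsym k => t.2 == s.2) pre then BLater s.2
           else BFirst s.2)
        else btype_aux (rcons pre s) w' (upd C s.2 true)
      else btype_aux (rcons pre s) w' (upd C s.2 false)
  end.

Definition blocking_type k (IS : lockst k) (w : seq (lsym k)) : btype k :=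
  btype_aux [::] w IS.

From mathcomp Require Import all_boot.
From Stdlib Require Import Permutation.
From Stdlib Require List.

Set Implicit Arguments.
Unset Strict Implicit.
Unset Printing Implicit Defensive.

(* Say τ(!) = P1 w.  Its blocking
   type gives τ(!) = u P1 v where u, run alone from IS, ends with lock 1 full;
   likewise τ(?) = p P2 q where p ends with lock 2 full.  Must-convergence of
   !0 | ?✓ forces p to leave lock 1 empty and u to run to completion after p,
   since otherwise τ(!) | τ(?) deadlocks without ✓; by monotonicity u then runs
   from every state with lock 1 empty and always fills lock 1.  Now take
   ?0 | !✓^n with n > |τ(?)|: running u in one copy of τ(!) fills lock 1, which
   blocks every other copy at its leading P1, and whenever τ(?) empties lock 1
   a fresh copy refills it.  So τ(?) ends stuck with no ✓ anywhere,
   contradicting must-convergence. *)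

Lemma In_mem (T : eqType) (x : T) (s : seq T) : List.In x s -> x \in s.
Proof. by elim: s => //= y s IH [->|/IH]; rewrite inE ?eqxx // => ->; rewrite orbT. Qed.

Lemma In_nseq A (x y : A) n : List.In x (nseq n y) -> x = y.
Proof. by elim: n => //= n IH [->|/IH]. Qed.

Lemma Permutation_count T (a : pred T) (s t : seq T) :
  Permutation s t -> count a s = count a t.
Proof.
elim=> //= [x s' t' _ ->|x y s'|s1 s2 s3 _ -> _ ->] //.
by rewrite addnCA.
Qed.

Lemma Permutation_all T (a : pred T) (s t : seq T) :
  Permutation s t -> all a s = all a t.
Proof.
by move=> st; rewrite !all_count -!count_predT !(Permutation_count _ st).
Qed.

Lemma star_cases A (r : A -> A -> Prop) x z :
  star r x z -> x = z \/ exists2 y, r x y & star r y z.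
Proof. by case=> [|{}x y {}z xy yz]; [left | right; exists y]. Qed.

Lemma star_trans A (r : A -> A -> Prop) x y z : star r x y -> star r y z -> star r x z.
Proof. by elim=> // a b c ab _ IH /IH; apply: star_step. Qed.

Lemma ord2_cases (j : 'I_2) : j = ord0 \/ j = ord_max.
Proof. by case: j => [[|[|]] ?]; [left|right|] => //; apply: val_inj. Qed.

Section Words.
Variable k : nat.
Implicit Types (w u : seq (lsym k)) (C D : lockst k).

Fixpoint exec w C : option (lockst k) :=
  match w with
  | [::] => Some C
  | s :: w' => if s.1 then (if C s.2 then None else exec w' (upd C s.2 true))
               else exec w' (upd C s.2 false)
  end.

(* The success marker ([::], true) is deliberately not stuck. *)
Definition stuck C (x : lsub k) : bool :=
  if x.1 is s :: _ then s.1 && C s.2 else ~~ x.2.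

Lemma exec_cat u w C :
  exec (u ++ w) C = if exec u C is Some D then exec w D else None.
Proof. by elim: u C => [|[[] i] u IH] C //=; case: (C i). Qed.

Lemma btype_aux_BLater pre w C i :
  btype_aux pre w C = BLater i ->
  exists u v D, [/\ w = u ++ LP i :: v, exec u C = Some D & D i].
Proof.
elim: w pre C => [|[[] j] w IH] pre C //=.
- case Cj: (C j); first by case: ifP => // _ [<-]; exists [::], w, C.
  move=> /IH [u [v [D [-> eD Di]]]].
  by exists ((true, j) :: u), v, D; rewrite /= Cj.
- by move=> /IH [u [v [D [-> eD Di]]]]; exists ((false, j) :: u), v, D.
Qed.

Lemma exec_max_prefix w C : exists u v D,
  [/\ w = u ++ v, exec u C = Some D & stuck D (v, false)].
Proof.
elim: w C => [|[b j] w IH] C; first by exists [::], [::], C.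
case: b; last first.
  have [u [v [D [-> eD sD]]]] := IH (upd C j false).
  by exists ((false, j) :: u), v, D.
case Cj: (C j); first by exists [::], ((true, j) :: w), C; rewrite /stuck /= Cj.
have [u [v [D [-> eD sD]]]] := IH (upd C j true).
by exists ((true, j) :: u), v, D; rewrite /= Cj.
Qed.

Lemma exec_mono w C D D' : (forall i, C i -> D i) -> exec w D = Some D' ->
  exists C', exec w C = Some C' /\ (forall i, C' i -> D' i).
Proof.
elim: w C D => [|[[] j] w IH] C D CD /=; first by case=> <-; exists C.
- case Dj: (D j) => //; have -> : C j = false by apply/negbTE/negP => /CD; rewrite Dj.
  by apply: IH => i; rewrite !ffunE; case: eqP => // _ /CD.
- by apply: IH => i; rewrite !ffunE; case: eqP => // _ /CD.
Qed.

Lemma exec_lock_indep w C D C' D' i :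
  C i = D i -> exec w C = Some C' -> exec w D = Some D' -> C' i = D' i.
Proof.
elim: w C D => [|[[] j] w IH] C D CDi /=; first by move=> [<-] [<-].
- by case: (C j); case: (D j) => //; apply: IH; rewrite !ffunE CDi.
- by apply: IH; rewrite !ffunE CDi.
Qed.

End Words.

Definition deadlocked k (S : lstate k) : bool := all (stuck S.2) S.1.

Definition lreach k (S T : lstate k) : Prop :=
  exists P, star (@lstep k) S (P, T.2) /\ Permutation P T.1.

Lemma lstep_perml k (P Q : lproc k) C X :
  Permutation P Q -> lstep (Q, C) X -> lstep (P, C) X.
Proof.
move=> PQ [[i [w [e [R [QR rest]]]]]|[i [w [e [R [QR rest]]]]]].
- by left; exists i, w, e, R; split=> //; apply: Permutation_trans PQ QR.
- by right; exists i, w, e, R; split=> //; apply: Permutation_trans PQ QR.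
Qed.

Lemma lreach_perml k (P Q : lproc k) C T :
  Permutation P Q -> lreach (Q, C) T -> lreach (P, C) T.
Proof.
move=> PQ [P' [/(@star_cases (lstate k)) [[<- ->]|[S QS SP']] P'T]].
  by exists P; split; [apply: star_refl | apply: Permutation_trans PQ P'T].
by exists P'; split=> //; apply: star_step (lstep_perml PQ QS) SP'.
Qed.

Lemma lreach_trans k (S T U : lstate k) : lreach S T -> lreach T U -> lreach S U.
Proof.
case: T => P C [P' [SP' P'P]] /(lreach_perml P'P) [Q [P'Q QU]].
by exists Q; split=> //; apply: star_trans SP' P'Q.
Qed.

Lemma star_lstep_exec k (u w : seq (lsym k)) e R C D :
  exec u C = Some D -> star (@lstep k) ((u ++ w, e) :: R, C) ((w, e) :: R, D).
Proof.
elim: u C => [|[[] j] u IH] C /=; first by move=> [<-]; apply: star_refl.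
- case Cj: (C j) => // /IH; apply: star_step.
  by left; exists j, (u ++ w), e, R.
- move/IH; apply: star_step.
  by right; exists j, (u ++ w), e, R.
Qed.

Lemma lreach_exec k (P : lproc k) (u w : seq (lsym k)) e R C D :
  Permutation P ((u ++ w, e) :: R) -> exec u C = Some D ->
  lreach (P, C) ((w, e) :: R, D).
Proof.
move=> PR /(star_lstep_exec w e R) uD; apply: lreach_perml PR _.
by exists ((w, e) :: R).
Qed.

Lemma deadlocked_not_lmay k (S : lstate k) : deadlocked S -> ~ lmay S.
Proof.
move=> dS [S' [/(@star_cases (lstate k)) [<-|[S1 SS1 _]] success]].
  by have := allP dS _ (In_mem success).
case: SS1 => [[i [w [e [R [PR [Ci _]]]]]]|[i [w [e [R [PR _]]]]]];
  by move: dS; rewrite /deadlocked (Permutation_all _ PR) /= /stuck /= ?Ci.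
Qed.

Lemma lmust_no_deadlock k (S T : lstate k) :
  lmust S -> lreach S T -> ~ deadlocked T.
Proof.
move=> mS [P [SP PT]] dT.
apply: (@deadlocked_not_lmay _ (P, T.2)) (mS _ SP).
by rewrite /deadlocked /= (Permutation_all _ PT).
Qed.

Definition is_recv (u : ssub) : bool := if u is SRecv _ then true else false.

Lemma recv_free_stuck P Q : count is_recv P = 0 -> ~ sstep P Q.
Proof. by move=> P0 [u1 [u2 [R [/(Permutation_count is_recv) /=]]]]; rewrite P0. Qed.

Lemma Permutation_redex P u1 u2 R : Permutation P (SSend u1 :: SRecv u2 :: R) ->
  [/\ List.In (SSend u1) P, List.In (SRecv u2) P &
      count is_recv R = (count is_recv P).-1].
Proof.
move=> PR; have In_P x : List.In x (SSend u1 :: SRecv u2 :: R) -> List.In x P.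
  exact: Permutation_in (Permutation_sym PR).
by split; [apply: In_P; left | apply: In_P; right; left | rewrite (Permutation_count _ PR)].
Qed.

Lemma smust_of_steps P : (exists Q, sstep P Q) ->
  (forall Q, sstep P Q -> ssuccessful Q /\ count is_recv Q = 0) -> smust P.
Proof.
move=> [Q0 PQ0] steps Q /(@star_cases sproc) [<-|[Q1 PQ1 /(@star_cases sproc) Q1Q]].
  by exists Q0; split; [apply: star_step PQ0 (star_refl _ _) | case: (steps _ PQ0)].
have [success Q1_stuck] := steps _ PQ1.
case: Q1Q => [<-|[Q2 /(recv_free_stuck Q1_stuck)]] //.
by exists Q1; split=> //; apply: star_refl.
Qed.

Lemma smust_send0_recv_check : smust [:: SSend SZero; SRecv SCheck].
Proof.
apply: smust_of_steps; first by exists [:: SZero; SCheck], SZero, SCheck, [::].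
move=> _ [u1 [u2 [R [/Permutation_redex [/= in1 in2 cR] ->]]]].
case: in1 => [[<-]|[|]] //; case: in2 => [|[[<-]|]] //.
by split; [right; left | rewrite /= cR].
Qed.

Lemma smust_recv0_send_checks n :
  0 < n -> smust (SRecv SZero :: nseq n (SSend SCheck)).
Proof.
move=> n_gt0; apply: smust_of_steps.
  case: n n_gt0 => // n _; exists [:: SCheck, SZero & nseq n (SSend SCheck)].
  by exists SCheck, SZero, (nseq n (SSend SCheck)); split=> //; apply: perm_swap.
move=> _ [u1 [u2 [R [/Permutation_redex [in1 in2 cR] ->]]]].
case: in1 => [//|in1]; have [->] := In_nseq in1.
case: in2 => [[<-]|in2]; last by have := In_nseq in2.
by split; [left | rewrite /= cR /= count_nseq mul0n].
Qed.

Section StartingWithP1.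
Variables (IS Cu Cp : lockst 2) (ts tr w u v p q : seq (lsym 2)).
Hypotheses (ts_P1 : ts = LP ord0 :: w) (IS_ord0 : IS ord0 = false).
(* The splits at which ts = τ(!) and tr = τ(?) block when run alone. *)
Hypotheses (ts_split : ts = u ++ LP ord0 :: v) (exec_u : exec u IS = Some Cu)
  (Cu_ord0 : Cu ord0).
Hypotheses (tr_split : tr = p ++ LP ord_max :: q) (exec_p : exec p IS = Some Cp)
  (Cp_ord_max : Cp ord_max).
Hypothesis must_send_recv : lmust ([:: (ts, false); (tr, true)], IS).

Lemma lreach_tr_prefix :
  lreach ([:: (ts, false); (tr, true)], IS)
         ([:: (LP ord_max :: q, true); (ts, false)], Cp).
Proof. by apply: lreach_exec exec_p; rewrite tr_split; apply: perm_swap. Qed.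

Lemma Cp_ord0 : Cp ord0 = false.
Proof.
apply/negbTE/negP => Cp0; apply: (lmust_no_deadlock must_send_recv lreach_tr_prefix).
by rewrite /deadlocked /= ts_P1 /stuck /= Cp_ord_max Cp0.
Qed.

Lemma exec_u_Cp : exists D, exec u Cp = Some D.
Proof.
have [u1 [u2 [D [u12 exec_u1 stuck_u2]]]] := exec_max_prefix u Cp.
case: u2 u12 stuck_u2 => [|[[] j] u3] u12 stuck_u2; last by [].
  by exists D; rewrite u12 cats0.
have {stuck_u2} Dj : D j by []; exfalso.
move: exec_u; rewrite u12 exec_cat; case exec_u1_IS: (exec u1 IS) => [E|//] /=.
case Ej: (E j) => // _.
(* Lock 1 evolves alike from Cp and from IS, so u can only block on lock 2,
   and then both components wait on lock 2. *)
have DE0 : D ord0 = E ord0 by apply: exec_lock_indep exec_u1 exec_u1_IS; rewrite Cp_ord0.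
have j1 : j = ord_max by case: (ord2_cases j) => // j0; move: Dj; rewrite j0 DE0 -j0 Ej.
subst j.
have reach_blocked : lreach ([:: (LP ord_max :: q, true); (ts, false)], Cp)
    ([:: (LP ord_max :: u3 ++ LP ord0 :: v, false); (LP ord_max :: q, true)], D).
  by apply: lreach_exec exec_u1; rewrite ts_split u12 -catA; apply: perm_swap.
apply: (lmust_no_deadlock must_send_recv (lreach_trans lreach_tr_prefix reach_blocked)).
by rewrite /deadlocked /= /stuck /= Dj.
Qed.

Lemma exec_u_fills_ord0 (C : lockst 2) :
  C ord0 = false -> exists2 D, exec u C = Some D & D ord0.
Proof.
move=> C0; have [D exec_u_D] := exec_u_Cp.
have C_Cp i : C i -> Cp i by case: (ord2_cases i) => ->; rewrite ?C0 ?Cp_ord_max.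
have [D' [exec_u_C _]] := exec_mono C_Cp exec_u_D.
by exists D'; rewrite // (exec_lock_indep _ exec_u_C exec_u) // C0 IS_ord0.
Qed.

(* Whenever r empties lock 1, one of the m copies of ts refills it by running u
   and leaves P1 v behind; r strictly shrinks, so m > |r| copies suffice. *)
Lemma deadlock_reachable r m n (C : lockst 2) : C ord0 -> size r < m ->
  exists2 T, lreach ((r, false) :: nseq m (ts, true) ++ nseq n (LP ord0 :: v, true), C) T
           & deadlocked T.
Proof.
move: (ltnSn (size r)); move: {2}(size r).+1 => N.
elim: N r m n C => // N IH r m n C r_le_N C0 r_lt_m.
have [r1 [r2 [C' [r12 exec_r1 stuck_r2]]]] := exec_max_prefix r C.
set rest := nseq m (ts, true) ++ _.
have reach_r2 : lreach ((r, false) :: rest, C) ((r2, false) :: rest, C').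
  by apply: lreach_exec exec_r1; rewrite r12.
case C'0: (C' ord0).
  exists ((r2, false) :: rest, C') => //.
  by rewrite /deadlocked /= stuck_r2 all_cat !all_nseq /stuck ts_P1 /= C'0 !orbT.
have r2_lt_r : size r2 < size r.
  case: r1 r12 exec_r1 => [|s r1] -> /=; last by rewrite ltnS size_cat leq_addl.
  by move=> [C'C]; move: C'0; rewrite -C'C C0.
case: m r_lt_m @rest reach_r2 => // m r_lt_m rest reach_r2.
have [C'' exec_u_C' C''0] := exec_u_fills_ord0 C'0.
have reach_refill : lreach ((r2, false) :: rest, C')
    ((LP ord0 :: v, true) :: (r2, false) ::
       nseq m (ts, true) ++ nseq n (LP ord0 :: v, true), C'').
  by apply: lreach_exec exec_u_C'; rewrite -ts_split; apply: perm_swap.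
have [T reach_T dead_T] :=
  IH r2 m n.+1 C'' (leq_trans r2_lt_r r_le_N) C''0 (leq_trans r2_lt_r r_lt_m).
exists T => //; apply: lreach_trans reach_r2 (lreach_trans reach_refill _).
exact: lreach_perml (Permutation_middle ((r2, false) :: _) _ _) reach_T.
Qed.

Lemma deadlock_from_recv0 n : size tr < n ->
  exists2 T, lreach ((tr, false) :: nseq n.+1 (ts, true), IS) T & deadlocked T.
Proof.
move=> tr_lt_n; have [T reach_T dead_T] := deadlock_reachable 1 Cu_ord0 tr_lt_n.
exists T => //.
have reach_ts_prefix : lreach ((tr, false) :: nseq n.+1 (ts, true), IS)
    ((LP ord0 :: v, true) :: (tr, false) :: nseq n (ts, true), Cu).
  by apply: lreach_exec exec_u; rewrite -ts_split; apply: perm_swap.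
apply: lreach_trans reach_ts_prefix _.
exact: lreach_perml (Permutation_cons_append ((tr, false) :: _) _) reach_T.
Qed.

End StartingWithP1.

Theorem lemma5p6 (IS : lockst 2) (ts tr : seq (lsym 2)) :
  correct_translation IS ts tr ->
  blocking_type IS ts = BLater (ord0 : 'I_2) ->
  blocking_type IS tr = BLater (ord_max : 'I_2) ->
  forall w, ts <> LP (ord0 : 'I_2) :: w.
Proof.
move=> correct ts_type tr_type w ts_P1.
have IS_ord0 : IS ord0 = false.
  by move: ts_type; rewrite ts_P1 /blocking_type /=; case: (IS ord0).
have [u [v [Cu [ts_split exec_u Cu_ord0]]]] := btype_aux_BLater ts_type.
have [p [q [Cp [tr_split exec_p Cp_ord_max]]]] := btype_aux_BLater tr_type.
have must_send_recv : lmust ([:: (ts, false); (tr, true)], IS).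
  by have := (correct _).2.1 smust_send0_recv_check; rewrite /tr_proc /= !cats0.
have must_recv_sends : lmust ((tr, false) :: nseq (size tr).+2 (ts, true), IS).
  have := (correct _).2.1 (smust_recv0_send_checks (ltn0Sn (size tr).+1)).
  by rewrite /tr_proc /= map_nseq /= !cats0.
have [T reach_T dead_T] := deadlock_from_recv0 ts_P1 IS_ord0 ts_split exec_u Cu_ord0
  tr_split exec_p Cp_ord_max must_send_recv (ltnSn (size tr)).
exact: lmust_no_deadlock must_recv_sends reach_T dead_T.
Qed.
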